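(* Let $\mathcal{H}_A$ be a Hilbert space of finite dimension $d_A$, $\rho_A$ a quantum state on $\mathcal{H}_A$, and $\gamma>0$. Then for every positive integer $n$, $$\overline{S}_{\overline{\epsilon}}(A^n)_{\rho^{\otimes n}}\le n\big(S(\rho_A)+\gamma\big),\qquad \underline{S}_{\underline{\epsilon}}(A^n)_{\rho^{\otimes n}}\ge n\big(S(\rho_A)-\gamma\big),$$ where $\overline{\epsilon}=(1+n)^{d_A}2^{-n\overline{D}(\rho_A,\gamma)}$ and $\underline{\epsilon}=(1+n)^{d_A}2^{-n\underline{D}(\rho_A,\gamma)}$, with $$\overline{D}(\rho,\gamma)=\inf_{\sigma:\ \rho\sigma=\sigma\rho,\ S(\sigma)+D(\sigma\|\rho)>S(\rho)+\gamma}D(\sigma\|\rho),\qquad \underline{D}(\rho,\gamma)=\inf_{\sigma:\ \rho\sigma=\sigma\rho,\ S(\sigma)+D(\sigma\|\rho)<S(\rho)-\gamma}D(\sigma\|\rho),$$ the infima being over normalized states $\sigma$ on $\mathcal{H}_A$.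
   Context: $S(\rho)=-\mathrm{Tr}\rho\log_2\rho$ is the von Neumann entropy and $D(\sigma\|\rho)=\mathrm{Tr}[\sigma(\log_2\sigma-\log_2\rho)]$ the relative entropy. For a Hermitian $Y=\sum_i\lambda_iE_i$, $\{Y\ge0\}=\sum_{i:\lambda_i\ge0}E_i$, and $\{\rho\ge c\}$ means $\{\rho-c\mathbb{I}\ge0\}$ (similarly for $\le$). For a state $\rho$ of a system $A$ and $\epsilon\ge0$, the information spectrum sup- and inf-entropies are $$\overline{S}_\epsilon(A)_\rho=\inf\{\lambda:\mathrm{Tr}[\{\rho\ge2^{-\lambda}\}\rho]\ge1-\epsilon\},\qquad \underline{S}_\epsilon(A)_\rho=\sup\{\lambda:\mathrm{Tr}[\{\rho\le2^{-\lambda}\}\rho]\ge1-\epsilon\}.$$ Here $A^n$ denotes $n$ copies of $A$ in the state $\rho_A^{\otimes n}$. *)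

From HB Require Import structures.
From mathcomp Require Import all_boot all_order all_algebra.
From mathcomp Require Import sesquilinear spectral.
From mathcomp Require Import complex mxtens.
From mathcomp Require Import all_classical all_reals all_analysis.
Set Implicit Arguments. Unset Strict Implicit. Unset Printing Implicit Defensive.
Import Order.TTheory GRing.Theory Num.Theory Num.Def.
Local Open Scope ring_scope.
Local Open Scope classical_set_scope.

Section QDefs.
Variable R : realType.
Local Notation C := R[i].

Definition toC (x : R) : C := Complex x 0.

Definition log2 (x : R) : R := ln x / ln 2.

Definition adjmx {m n} (A : 'M[C]_(m, n)) : 'M[C]_(n, m) := (map_mx conjC A)^T.

Definition hermitian {d} (A : 'M[C]_d) : Prop := adjmx A = A.

Definition psd {d} (A : 'M[C]_d) : Prop :=
  hermitian A /\ forall v : 'rV[C]_d, 0 <= (v *m A *m adjmx v) 0 0.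

Definition is_state {d} (rho : 'M[C]_d) : Prop := psd rho /\ \tr rho = 1.

(* eigenvalues of a Hermitian matrix, from the spectral decomposition
   A = P^-1 diag(sp) P of mathcomp's spectral.v (P unitary) *)
Definition eigval {d} (A : 'M[C]_d) (i : 'I_d) : R := complex.Re (spectral_diag A 0 i).

Definition fcalc {d} (f : R -> R) (A : 'M[C]_d) : 'M[C]_d :=
  invmx (spectralmx A) *m diag_mx (\row_i toC (f (eigval A i))) *m spectralmx A.

Definition proj_ge0 {d} (Y : 'M[C]_d) : 'M[C]_d :=
  fcalc (fun x => if 0 <= x then 1 else 0) Y.
Definition proj_le0 {d} (Y : 'M[C]_d) : 'M[C]_d :=
  fcalc (fun x => if x <= 0 then 1 else 0) Y.

Definition proj_ge {d} (rho : 'M[C]_d) (c : R) : 'M[C]_d := proj_ge0 (rho - (toC c)%:M).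
Definition proj_le {d} (rho : 'M[C]_d) (c : R) : 'M[C]_d := proj_le0 (rho - (toC c)%:M).

Definition retr {d} (A : 'M[C]_d) : R := complex.Re (\tr A).

Definition vN_entropy {d} (rho : 'M[C]_d) : R := - retr (rho *m fcalc log2 rho).

Definition rel_entropy {d} (sigma rho : 'M[C]_d) : \bar R :=
  if (kermx rho <= kermx sigma)%MS
  then (retr (sigma *m (fcalc log2 sigma - fcalc log2 rho)))%:E
  else +oo%E.

Definition sup_spec_entropy {d} (eps : R) (rho : 'M[C]_d) : \bar R :=
  ereal_inf (EFin @` [set l : R | 1 - eps <= retr (proj_ge rho (powR 2 (- l)) *m rho)]).

Definition inf_spec_entropy {d} (eps : R) (rho : 'M[C]_d) : \bar R :=
  ereal_sup (EFin @` [set l : R | 1 - eps <= retr (proj_le rho (powR 2 (- l)) *m rho)]).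

Definition Dbar {d} (rho : 'M[C]_d) (gamma : R) : \bar R :=
  ereal_inf [set rel_entropy sigma rho | sigma in
    [set sigma : 'M[C]_d | is_state sigma /\ rho *m sigma = sigma *m rho /\
       ((vN_entropy rho + gamma)%:E < (vN_entropy sigma)%:E + rel_entropy sigma rho)%E]].

Definition Dund {d} (rho : 'M[C]_d) (gamma : R) : \bar R :=
  ereal_inf [set rel_entropy sigma rho | sigma in
    [set sigma : 'M[C]_d | is_state sigma /\ rho *m sigma = sigma *m rho /\
       ((vN_entropy sigma)%:E + rel_entropy sigma rho < (vN_entropy rho - gamma)%:E)%E]].

(* (1+n)^dA * 2^(-n D), with 2^(-oo) = 0 *)
Definition eps_of (n dA : nat) (D : \bar R) : R :=
  match D with
  | EFin r => (1 + n%:R) ^+ dA * powR 2 (- (n%:R * r))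
  | +oo%E => 0
  | -oo%E => 0
  end.

End QDefs.

(* Method of types.  Diagonalise [rho] with eigenvalues [p] in an orthonormal
   basis; then [rho^{(x)n}] is diagonal in the product basis, with eigenvalue
   [p^n(K) = 2^(-n (H(Q) + D(Q || p)))] at a word [K] of type [Q].  Hence
   [p^n(K) < 2^(-n (S(rho) + gamma))] exactly when [H(Q) + D(Q || p)] exceeds
   [S(rho) + gamma]; the state with spectrum [Q] in the eigenbasis of [rho]
   commutes with [rho], so then [Dbar(rho, gamma) <= D(Q || p)].  Writing
   [p^n(K) = Q^n(K) 2^(-n D(Q || p))], where the words of type [Q] carry total
   [Q^n]-weight at most one and there are at most [(1 + n)^d] types, the
   eigenvalues below the threshold weigh at most
   [(1 + n)^d 2^(-n Dbar(rho, gamma))].  The bound on the inf-spectrum entropy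
   is symmetric. *)

From Pilot Require Import Defs.
From HB Require Import structures.
From mathcomp Require Import all_boot all_order all_algebra.
From mathcomp Require Import sesquilinear spectral.
From mathcomp Require Import complex mxtens.
From mathcomp Require Import all_classical all_reals all_analysis.
From mathcomp Require Import ring lra.
Import Order.TTheory GRing.Theory Num.Theory Num.Def.
Set Implicit Arguments.
Unset Strict Implicit.
Unset Printing Implicit Defensive.
Local Open Scope ring_scope.

(* An index [K : 'I_(d ^ k.+1)] of the [k.+1]-fold tensor power stands for
   the word of length [k.+1] over ['I_d] read off by [mxtens_unindex]. *)
Fixpoint occ {d : nat} (k : nat) : 'I_(d ^ k.+1) -> 'I_d -> nat :=
  match k return 'I_(d ^ k.+1) -> 'I_d -> nat with
  | k'.+1 => fun (K : 'I_(d * d ^ k'.+1)) a =>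
     (((mxtens_unindex K).1 == a) + @occ d k' (mxtens_unindex K).2 a)%N
  | 0 => fun K a => (K == a :> nat)
  end.

Lemma sum_eq1 d (i : 'I_d) : (\sum_a (i == a) = 1)%N.
Proof. by rewrite (bigD1 i) //= eqxx big1 // => a /negPf; rewrite eq_sym => ->. Qed.

Lemma occ_sum d k (K : 'I_(d ^ k.+1)) : (\sum_a occ K a = k.+1)%N.
Proof.
elim: k K => [|k IH] K; first exact: (sum_eq1 (K : 'I_d)).
by rewrite /= big_split /= IH sum_eq1.
Qed.

Lemma occ_le d k (K : 'I_(d ^ k.+1)) a : (occ K a <= k.+1)%N.
Proof. by rewrite -(occ_sum K) (bigD1 a) //= leq_addr. Qed.

Section IID.
Variables (R : comPzRingType) (d : nat) (q : 'I_d -> R).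

Definition iid k (K : 'I_(d ^ k.+1)) : R := \prod_a q a ^+ occ K a.

Lemma prod_expr_eq (i : 'I_d) : \prod_a q a ^+ (i == a) = q i.
Proof.
by rewrite (bigD1 i) //= eqxx expr1 big1 ?mulr1 // => a /negPf; rewrite eq_sym => ->.
Qed.

Lemma iid0 (K : 'I_(d ^ 1)) : iid K = q K.
Proof. exact: (prod_expr_eq (K : 'I_d)). Qed.

Lemma iidS k (K : 'I_(d ^ k.+2)) :
  iid K = q (mxtens_unindex K).1 * iid (mxtens_unindex K).2.
Proof.
rewrite /iid /= -[in RHS](prod_expr_eq (mxtens_unindex K).1) -big_split /=.
by apply: eq_bigr => a _; rewrite exprD.
Qed.

Lemma sum_iid k : \sum_(K : 'I_(d ^ k.+1)) iid K = (\sum_a q a) ^+ k.+1.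
Proof.
elim: k => [|k IH]; first by rewrite expr1; apply: eq_bigr => K _; rewrite iid0.
by rewrite exprS -IH mulr_sum; apply: eq_bigr => K _; rewrite iidS.
Qed.

End IID.

Lemma iid_ge0 (R : numDomainType) d (q : 'I_d -> R) k (K : 'I_(d ^ k.+1)) :
  (forall a, 0 <= q a) -> 0 <= iid q K.
Proof. by move=> q0; apply: prodr_ge0 => a _; exact: exprn_ge0. Qed.

Lemma iid_gt0_occ (R : numDomainType) d (q : 'I_d -> R) k (K : 'I_(d ^ k.+1)) a :
  0 < iid q K -> q a = 0 -> occ K a = 0%N.
Proof.
move=> qK0 qa0; apply/eqP; apply: contraTT qK0 => occ0.
by rewrite /iid (bigD1 a) //= qa0 expr0n (negPf occ0) mul0r ltxx.
Qed.

Lemma ler_sum_restrict (R : numDomainType) (I : finType) (P : pred I) (F : I -> R) :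
  (forall i, 0 <= F i) -> \sum_(i | P i) F i <= \sum_i F i.
Proof. by move=> F0; rewrite [leRHS](bigID P) /= lerDl sumr_ge0. Qed.

Lemma sum_indicator_mul (R : pzRingType) (I : finType) (P : pred I) (F : I -> R) :
  \sum_i (if P i then 1 else 0) * F i = \sum_i F i - \sum_(i | ~~ P i) F i.
Proof.
rewrite [\sum_i F i](bigID P) /= addrK [RHS]big_mkcond /=.
by apply: eq_bigr => i _; case: (P i); rewrite ?mul1r ?mul0r.
Qed.

Section Logarithms.
Variable R : realType.

Lemma ln2_gt0 : 0 < ln (2 : R).
Proof. by apply: ln_gt0; rewrite ltr1n. Qed.

Lemma log2_le0 (x : R) : x <= 1 -> log2 x <= 0.
Proof.
by move=> x1; apply: mulr_le0_ge0; [exact: ln_le0 | rewrite invr_ge0 ltW // ln2_gt0].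
Qed.

Lemma powR2E (x : R) : powR 2 x = expR (x * ln 2).
Proof. by rewrite /powR pnatr_eq0. Qed.

Lemma ltr_powR2 (x y : R) : (powR 2 x < powR 2 y) = (x < y).
Proof. by rewrite !powR2E ltr_expR ltr_pM2r // ln2_gt0. Qed.

Lemma expr_powR2 (x : R) (t : nat) : 0 < x -> x ^+ t = powR 2 (t%:R * log2 x).
Proof.
move=> x0; rewrite powR2E /log2 mulrA divfK ?gt_eqF ?ln2_gt0 //.
by rewrite expRM_natl lnK // posrE.
Qed.

Lemma prod_powR2 (I : finType) (F : I -> R) :
  \prod_i powR 2 (F i) = powR 2 (\sum_i F i).
Proof. by rewrite powR2E mulr_suml expR_sum; apply: eq_bigr => i _; rewrite powR2E. Qed.

Lemma xlnx_ge (x : R) : 0 <= x -> - 1 <= x * ln x.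
Proof.
rewrite le_eqVlt => /orP[/eqP <-|x0]; first by rewrite mul0r lerN10.
have h := expR_ge1Dx (- ln x); rewrite expRN lnK ?posrE // in h.
have h2 : x * (1 + - ln x) <= x * x^-1 by rewrite ler_wpM2l // ltW.
by rewrite mulfV ?gt_eqF // in h2; lra.
Qed.

End Logarithms.

Section MethodOfTypes.
Variables (R : realType) (d : nat).
Implicit Types (p q Q : 'I_d -> R) (k : nat).

Definition shannon Q : R := - \sum_a Q a * log2 (Q a).

Definition relent Q p : R := \sum_a Q a * (log2 (Q a) - log2 (p a)).

Lemma cross_entropyE Q p : - \sum_a Q a * log2 (p a) = shannon Q + relent Q p.
Proof. by rewrite /shannon /relent -!sumrN -big_split; apply: eq_bigr => a _ /=; ring. Qed.

Definition empirical k (K : 'I_(d ^ k.+1)) a : R := (occ K a)%:R / k.+1%:R.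

Lemma empirical_ge0 k (K : 'I_(d ^ k.+1)) a : 0 <= empirical K a.
Proof. by rewrite divr_ge0 // ler0n. Qed.

Lemma empirical_sum k (K : 'I_(d ^ k.+1)) : \sum_a empirical K a = 1.
Proof. by rewrite -mulr_suml -natr_sum occ_sum mulfV // pnatr_eq0. Qed.

Lemma iid_powR2 q k (K : 'I_(d ^ k.+1)) : (forall a, occ K a != 0%N -> 0 < q a) ->
  iid q K = powR 2 (k.+1%:R * \sum_a empirical K a * log2 (q a)).
Proof.
move=> hq; rewrite mulr_sumr -prod_powR2; apply: eq_bigr => a _; rewrite /empirical.
have [->|occ0] := eqVneq (occ K a) 0%N.
  by rewrite expr0 mulr0n !mul0r mulr0 powRr0.
by rewrite expr_powR2 ?hq //; congr powR; field; rewrite nat1r pnatr_eq0.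
Qed.

Lemma iid_empirical k (K : 'I_(d ^ k.+1)) :
  iid (empirical K) K = powR 2 (- (k.+1%:R * shannon (empirical K))).
Proof.
rewrite /shannon mulrN opprK; apply: iid_powR2 => a occ0.
by rewrite divr_gt0 // ltr0n lt0n.
Qed.

Lemma iid_gt0E p k (K : 'I_(d ^ k.+1)) : (forall a, 0 <= p a) -> 0 < iid p K ->
  iid p K = powR 2 (- (k.+1%:R * (shannon (empirical K) + relent (empirical K) p))).
Proof.
move=> p0 pK; rewrite -cross_entropyE mulrN opprK; apply: iid_powR2 => a.
rewrite lt_def p0 andbT; apply: contra => /eqP pa0.
by rewrite (iid_gt0_occ pK pa0).
Qed.

Lemma iid_gt0_factor p k (K : 'I_(d ^ k.+1)) : (forall a, 0 <= p a) -> 0 < iid p K ->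
  iid p K = iid (empirical K) K * powR 2 (- (k.+1%:R * relent (empirical K) p)).
Proof.
move=> p0 pK; rewrite iid_gt0E // iid_empirical -powRD ?pnatr_eq0 ?implybT //.
by rewrite mulrDr opprD.
Qed.

Lemma iid_lt_powR2 p k (K : 'I_(d ^ k.+1)) s : (forall a, 0 <= p a) -> 0 < iid p K ->
  (iid p K < powR 2 (- (k.+1%:R * s)))
  = (s < shannon (empirical K) + relent (empirical K) p).
Proof. by move=> p0 pK; rewrite {1}iid_gt0E // ltr_powR2 ltrN2 ltr_pM2l ?ltr0n. Qed.

Lemma powR2_lt_iid p k (K : 'I_(d ^ k.+1)) s : (forall a, 0 <= p a) -> 0 < iid p K ->
  (powR 2 (- (k.+1%:R * s)) < iid p K)
  = (shannon (empirical K) + relent (empirical K) p < s).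
Proof. by move=> p0 pK; rewrite {1}iid_gt0E // ltr_powR2 ltrN2 ltr_pM2l ?ltr0n. Qed.

Definition type_of k (K : 'I_(d ^ k.+1)) : {ffun 'I_d -> 'I_k.+2} :=
  [ffun a => inord (occ K a)].

Lemma type_of_empirical k (K K' : 'I_(d ^ k.+1)) :
  type_of K = type_of K' -> empirical K = empirical K'.
Proof.
move=> /ffunP tKK'; apply: funext => a; have := congr1 val (tKK' a).
by rewrite !ffunE /= !inordK ?ltnS ?occ_le // /empirical => ->.
Qed.

(* Words of a given type carry total [Q^n]-weight at most one, and there are
   at most [(1 + n) ^ d] types. *)
Lemma sum_iid_empirical_le k :
  \sum_(K : 'I_(d ^ k.+1)) iid (empirical K) K <= (1 + k.+1%:R) ^+ d.
Proof.
rewrite (partition_big (@type_of k) xpredT) //=.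
apply: (@le_trans _ _ (\sum_(t : {ffun 'I_d -> 'I_k.+2}) 1)); last first.
  by rewrite sumr_const card_ffun !card_ord natrX nat1r.
apply: ler_sum => t _.
have [K0 /eqP tK0 | none] := pickP (fun K => type_of K == t); last first.
  by rewrite big_pred0 // => K; rewrite none.
rewrite (eq_bigr (fun K => iid (empirical K0) K)); last first.
  by move=> K /eqP tK; rewrite (type_of_empirical (etrans tK (esym tK0))).
apply: le_trans (ler_sum_restrict _ (fun K => iid_ge0 K (empirical_ge0 K0))) _.
by rewrite sum_iid empirical_sum expr1n.
Qed.

Lemma iid_tail_le p k (B : pred 'I_(d ^ k.+1)) r : (forall a, 0 <= p a) ->
  (forall K, B K -> 0 < iid p K -> r <= relent (empirical K) p) ->
  \sum_(K | B K) iid p K <= (1 + k.+1%:R) ^+ d * powR 2 (- (k.+1%:R * r)).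
Proof.
move=> p0 hB; set c := powR 2 _.
have iid_le K : B K -> iid p K <= iid (empirical K) K * c.
  move=> BK; have QK0 := iid_ge0 K (empirical_ge0 K).
  have [pK0|pK] := eqVneq (iid p K) 0; first by rewrite pK0 mulr_ge0 ?powR_ge0.
  have {}pK : 0 < iid p K by rewrite lt_def pK iid_ge0.
  rewrite iid_gt0_factor // ler_wpM2l //.
  by rewrite ler_powR ?ler1n // lerN2 ler_pM2l ?ltr0n // hB.
apply: le_trans (ler_sum _ iid_le) _; rewrite -mulr_suml ler_wpM2r ?powR_ge0 //.
apply: le_trans _ (sum_iid_empirical_le k).
apply: ler_sum_restrict => K; apply: iid_ge0 => a; exact: empirical_ge0.
Qed.

Lemma iid_tail_le_eps_of p k (B : pred 'I_(d ^ k.+1)) (D : \bar R) :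
  (forall a, 0 <= p a) -> (-oo < D)%E ->
  (forall K, B K -> 0 < iid p K -> (D <= (relent (empirical K) p)%:E)%E) ->
  \sum_(K | B K) iid p K <= eps_of k.+1 d D.
Proof.
case: D => [r| |] //= p0 _ hB.
  by apply: iid_tail_le => // K BK pK; rewrite -lee_fin hB.
apply: sumr_le0 => K BK; rewrite leNgt; apply/negP => pK.
by have := hB K BK pK.
Qed.

End MethodOfTypes.

Arguments empirical {R d k} K a.


Section ComplexMatrices.
Variable R : realType.
Local Notation C := R[i].
Local Notation dg e := (diag_mx (\row_i toC (e i))).

Lemma toCE (x : R) : toC x = (x%:C)%C. Proof. by []. Qed.

Lemma Re_toC (x : R) : complex.Re (toC x) = x. Proof. by []. Qed.

Lemma toCB (x y : R) : toC (x - y) = toC x - toC y.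
Proof. by rewrite !toCE rmorphB. Qed.

Lemma toCM (x y : R) : toC (x * y) = toC x * toC y.
Proof. by rewrite !toCE rmorphM. Qed.

Lemma conjC_toC (x : R) : conjC (toC x) = toC x.
Proof. exact: conjc_real. Qed.

Lemma ReD (x y : C) : complex.Re (x + y) = complex.Re x + complex.Re y.
Proof. by case: x; case: y. Qed.

Lemma ReB (x y : C) : complex.Re (x - y) = complex.Re x - complex.Re y.
Proof. by case: x; case: y. Qed.

Lemma Re_sum (I : finType) (F : I -> C) :
  complex.Re (\sum_i F i) = \sum_i complex.Re (F i).
Proof. exact: (big_morph _ ReD). Qed.

Lemma retrB n (A B : 'M[C]_n) : retr (A - B) = retr A - retr B.
Proof. by rewrite /retr raddfB ReB. Qed.

Lemma ge0_complex_real (z : C) : 0 <= z -> z = toC (complex.Re z) /\ 0 <= complex.Re z.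
Proof. by case: z => a b; rewrite lecE /= => /andP[/eqP -> h]. Qed.

Lemma adjmxE m n (A : 'M[C]_(m, n)) : adjmx A = map_mx conjC (A ^T).
Proof. by rewrite /adjmx map_trmx. Qed.

Lemma adjmx_mul m n p (A : 'M[C]_(m, n)) (B : 'M[C]_(n, p)) :
  adjmx (A *m B) = adjmx B *m adjmx A.
Proof. by rewrite /adjmx map_mxM trmx_mul. Qed.

Lemma adjmxK m n (A : 'M[C]_(m, n)) : adjmx (adjmx A) = A.
Proof. by apply/matrixP=> i j; rewrite !mxE conjCK. Qed.

Lemma adjmx_row m n (A : 'M[C]_(m, n)) i : adjmx (row i A) = col i (adjmx A).
Proof. by apply/matrixP=> a b; rewrite !mxE. Qed.

Lemma adjmx_diag_real n (e : 'I_n -> R) : adjmx (dg e) = dg e.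
Proof.
apply/matrixP=> i j; rewrite !mxE rmorphMn /= conjC_toC eq_sym.
by case: eqP => [->|].
Qed.

Lemma invmx_unitary_adj n (V : 'M[C]_n) : V \is unitarymx -> invmx V = adjmx V.
Proof. by move=> /invmx_unitary ->; rewrite adjmxE. Qed.

Lemma self_adjoint_normalmx n (A : 'M[C]_n) : Defs.hermitian A -> A \is normalmx.
Proof. by move=> hA; apply/normalmxP; rewrite -adjmxE hA. Qed.

Lemma psd_entry n (S V : 'M[C]_n) i : psd S -> 0 <= (V *m S *m adjmx V) i i.
Proof.
move=> [_ /(_ (row i V))]; rewrite adjmx_row -row_mul.
suff -> : (row i (V *m S) *m col i (adjmx V)) 0 0 = (V *m S *m adjmx V) i i by [].
by rewrite !mxE; apply: eq_bigr => k _; rewrite !mxE.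
Qed.

Lemma diag_real_mul n (a b : 'I_n -> R) : dg a *m dg b = dg (fun i => a i * b i).
Proof. by apply/matrixP=> i j; rewrite mul_diag_mx !mxE mulrnAr toCM. Qed.

(* Two diagonalisations of the same matrix are intertwined by [W]: where
   [W i j != 0] the [i]-th and [j]-th eigenvalues agree. *)
Lemma diag_intertwine n (W : 'M[C]_n) (c : 'rV[C]_n) (e : 'I_n -> R) (f : R -> R) :
  diag_mx c *m W = W *m dg e ->
  dg (fun i => f (complex.Re (c 0 i))) *m W = W *m dg (fun i => f (e i)).
Proof.
move=> /matrixP cW; apply/matrixP=> i j; move: (cW i j).
rewrite !mul_diag_mx !mul_mx_diag !mxE.
have [->|Wn] := eqVneq (W i j) 0; first by rewrite !mulr0 !mul0r.
by move=> h; rewrite (mulIf Wn (etrans h (mulrC _ _))) Re_toC mulrC.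
Qed.

(* Acting on row vectors, [specmx V e] has the rows of [V] as eigenvectors,
   with eigenvalues [e]; [fcalc f A] is [specmx (spectralmx A) (f \o eigval A)]. *)
Definition specmx n (V : 'M[C]_n) (e : 'I_n -> R) : 'M[C]_n :=
  invmx V *m dg e *m V.

Lemma specmxB n (V : 'M[C]_n) (a b : 'I_n -> R) :
  specmx V a - specmx V b = specmx V (fun i => a i - b i).
Proof.
rewrite /specmx -mulmxBl -mulmxBr; congr (_ *m _ *m _).
apply/matrixP=> i j; rewrite !mxE toCB.
by case: (i == j); rewrite ?mulr1n ?mulr0n ?subr0.
Qed.

Section InvertibleBasis.
Variables (n : nat) (V : 'M[C]_n).
Hypothesis V_unit : V \in unitmx.

Lemma specmxM (a b : 'I_n -> R) :
  specmx V a *m specmx V b = specmx V (fun i => a i * b i).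
Proof.
rewrite /specmx -!mulmxA; congr (_ *m _).
by rewrite !mulmxA (mulmxK V_unit) diag_real_mul.
Qed.

Lemma specmxC (a b : 'I_n -> R) : specmx V a *m specmx V b = specmx V b *m specmx V a.
Proof.
rewrite (specmxM a b) (specmxM b a).
by congr (specmx V _); apply: funext => i; exact: mulrC.
Qed.

Lemma specmx_cst (c : R) : specmx V (fun=> c) = (toC c)%:M.
Proof.
rewrite /specmx; have -> : dg (fun=> c) = (toC c)%:M :> 'M[C]_n.
  by apply/matrixP=> i j; rewrite !mxE.
by rewrite mul_mx_scalar -scalemxAl (mulVmx V_unit) scalemx1.
Qed.

Lemma mxtrace_specmx (e : 'I_n -> R) : \tr (specmx V e) = toC (\sum_i e i).
Proof.
rewrite mxtrace_mulC mulmxA (mulmxV V_unit) mul1mx mxtrace_diag toCE rmorph_sum.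
by apply: eq_bigr => i _; rewrite mxE.
Qed.

Lemma retr_specmx (e : 'I_n -> R) : retr (specmx V e) = \sum_i e i.
Proof. by rewrite /retr mxtrace_specmx. Qed.

End InvertibleBasis.

Section UnitaryBasis.
Variables (n : nat) (V : 'M[C]_n).
Hypothesis V_unitary : V \is unitarymx.
Let V_unit : V \in unitmx := unitarymx_unit V_unitary.

Lemma fcalc_specmx (e : 'I_n -> R) (f : R -> R) :
  fcalc f (specmx V e) = specmx V (fun i => f (e i)).
Proof.
set A := specmx V e.
have HP : A = invmx (spectralmx A) *m diag_mx (spectral_diag A) *m spectralmx A.
  by apply/orthomx_spectralP/orthomx_spectral_subproof; exists (V, \row_i toC (e i)).
have Pi : spectralmx A \in unitmx := spectral_unit A.
set P := spectralmx A in HP Pi *; set D := spectral_diag A in HP *.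
set W := P *m invmx V.
have PE : P = W *m V by rewrite /W -mulmxA (mulVmx V_unit) mulmx1.
have intertwine : diag_mx D *m W = W *m dg e.
  rewrite /W; transitivity (P *m A *m invmx V).
    by rewrite HP !mulmxA (mulmxV Pi) mul1mx.
  by rewrite /A /specmx !mulmxA (mulmxK V_unit).
have VE : invmx V = invmx P *m W by rewrite /W mulmxA (mulVmx Pi) mul1mx.
rewrite /fcalc -/P /specmx VE -(mulmxA (invmx P) W) -(diag_intertwine f intertwine).
by rewrite mulmxA -(mulmxA _ W V) -PE.
Qed.

Lemma fcalc_specmx_shift (e : 'I_n -> R) (c : R) (f : R -> R) :
  fcalc f (specmx V e - (toC c)%:M) = specmx V (fun i => f (e i - c)).
Proof. by rewrite -(specmx_cst V_unit c) specmxB fcalc_specmx. Qed.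

Lemma proj_ge_specmx (mu : 'I_n -> R) (c : R) :
  proj_ge (specmx V mu) c = specmx V (fun K => if c <= mu K then 1 else 0).
Proof.
rewrite /proj_ge /proj_ge0 fcalc_specmx_shift.
by congr (specmx V _); apply: funext => K; rewrite subr_ge0.
Qed.

Lemma proj_le_specmx (mu : 'I_n -> R) (c : R) :
  proj_le (specmx V mu) c = specmx V (fun K => if mu K <= c then 1 else 0).
Proof.
rewrite /proj_le /proj_le0 fcalc_specmx_shift.
by congr (specmx V _); apply: funext => K; rewrite subr_le0.
Qed.

Lemma specmx_psd (e : 'I_n -> R) : (forall i, 0 <= e i) -> psd (specmx V e).
Proof.
move=> e0; rewrite /specmx (invmx_unitary_adj V_unitary); split.
  by rewrite /Defs.hermitian !adjmx_mul adjmxK adjmx_diag_real mulmxA.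
move=> v; set w := v *m adjmx V.
have -> : v *m (adjmx V *m dg e *m V) *m adjmx v = w *m dg e *m adjmx w.
  by rewrite adjmx_mul adjmxK !mulmxA.
rewrite mul_mx_diag !mxE; apply: sumr_ge0 => j _; rewrite !mxE mulrAC.
by apply: mulr_ge0; [exact: mul_conjC_ge0 | rewrite toCE ler0c].
Qed.

Lemma specmx_state (e : 'I_n -> R) :
  (forall i, 0 <= e i) -> \sum_i e i = 1 -> is_state (specmx V e).
Proof.
move=> e0 e1; split; first exact: specmx_psd.
by rewrite (mxtrace_specmx V_unit) e1.
Qed.

Lemma retr_psd_mul_specmx_le0 (S : 'M[C]_n) (l : 'I_n -> R) :
  psd S -> (forall i, l i <= 0) -> retr (S *m specmx V l) <= 0.
Proof.
move=> hS hl; rewrite /retr /specmx mulmxA mxtrace_mulC !mulmxA.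
rewrite (invmx_unitary_adj V_unitary) /mxtrace Re_sum; apply: sumr_le0 => i _.
rewrite mul_mx_diag mxE; set z := (V *m S *m adjmx V) i i.
have [-> z0] := ge0_complex_real (psd_entry V i hS : 0 <= z).
by rewrite mxE -toCM; apply: mulr_ge0_le0.
Qed.

Lemma vN_entropy_specmx (Q : 'I_n -> R) : vN_entropy (specmx V Q) = shannon Q.
Proof. by rewrite /vN_entropy fcalc_specmx (specmxM V_unit) retr_specmx. Qed.

Lemma kermx_specmx_sub (p Q : 'I_n -> R) :
  (forall a, p a = 0 -> Q a = 0) -> (kermx (specmx V p) <= kermx (specmx V Q))%MS.
Proof.
move=> hQ; have -> : specmx V Q = specmx V p *m specmx V (fun a => Q a / p a).
  rewrite (specmxM V_unit); congr (specmx V _); apply: funext => a.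
  have [pa0|pa0] := eqVneq (p a) 0; first by rewrite pa0 hQ // mul0r.
  by rewrite mulrC divfK.
by rewrite sub_kermx mulmxA mulmx_ker mul0mx.
Qed.

Lemma rel_entropy_specmx (p Q : 'I_n -> R) : (forall a, p a = 0 -> Q a = 0) ->
  rel_entropy (specmx V Q) (specmx V p) = (relent Q p)%:E.
Proof.
move=> hQ; rewrite /rel_entropy kermx_specmx_sub // !fcalc_specmx specmxB.
by rewrite (specmxM V_unit) retr_specmx.
Qed.

End UnitaryBasis.

Lemma psd_spectral_diag n (S : 'M[C]_n) i : psd S ->
  spectral_diag S 0 i = toC (eigval S i) /\ 0 <= eigval S i.
Proof.
move=> hS; have := psd_entry (spectralmx S) i hS.
have Pu := spectral_unitarymx S; have Pi := unitarymx_unit Pu.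
rewrite {2}(orthomx_spectralP (self_adjoint_normalmx hS.1)) -(invmx_unitary_adj Pu).
rewrite !mulmxA (mulmxV Pi) mul1mx (mulmxK Pi) mxE eqxx mulr1n.
exact: ge0_complex_real.
Qed.

Lemma psd_specmxE n (S : 'M[C]_n) : psd S -> S = specmx (spectralmx S) (eigval S).
Proof.
move=> hS; rewrite {1}(orthomx_spectralP (self_adjoint_normalmx hS.1)) /specmx.
by congr (_ *m diag_mx _ *m _); apply/rowP=> i; rewrite mxE (psd_spectral_diag i hS).1.
Qed.

Lemma psd_eigval_ge0 n (S : 'M[C]_n) i : psd S -> 0 <= eigval S i.
Proof. by move=> hS; case: (psd_spectral_diag i hS). Qed.

Lemma state_eigval_sum n (S : 'M[C]_n) : is_state S -> \sum_i eigval S i = 1.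
Proof.
move=> [hS htr]; rewrite -(retr_specmx (spectral_unit S)) -psd_specmxE //.
by rewrite /retr htr.
Qed.

Lemma retr_mul_log2_ge n (S : 'M[C]_n) : psd S ->
  - (n%:R / ln 2) <= retr (S *m fcalc (@log2 R) S).
Proof.
move=> hS; have Pu := spectral_unitarymx S.
rewrite {1 2}(psd_specmxE hS) (fcalc_specmx Pu) (specmxM (unitarymx_unit Pu)).
rewrite (retr_specmx (unitarymx_unit Pu)) /=.
have xlog2x_ge i : - (ln 2)^-1 <= eigval S i * log2 (eigval S i).
  rewrite /log2 mulrA -mulN1r; apply: ler_wpM2r; first by rewrite invr_ge0 ltW // ln2_gt0.
  exact/xlnx_ge/psd_eigval_ge0.
apply: le_trans (ler_sum _ (fun i _ => xlog2x_ge i)).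
by rewrite sumr_const card_ord mulNrn -[(ln 2)^-1 *+ n]mulr_natl.
Qed.

Lemma rel_entropy_ge n (S U : 'M[C]_n) (p : 'I_n -> R) : U \is unitarymx ->
  (forall a, p a <= 1) -> is_state S ->
  ((- (n%:R / ln 2))%:E <= rel_entropy S (specmx U p))%E.
Proof.
move=> Uu p1 [hS _]; rewrite /rel_entropy; case: ifP => _; last by rewrite leey.
rewrite lee_fin mulmxBr retrB (fcalc_specmx Uu).
have := retr_mul_log2_ge hS.
have := retr_psd_mul_specmx_le0 Uu hS (fun a => log2_le0 (p1 a)).
lra.
Qed.

Lemma adjmx_tens m n p r (A : 'M[C]_(m, n)) (B : 'M[C]_(p, r)) :
  adjmx (A *t B) = adjmx A *t adjmx B.
Proof. by apply/matrixP=> i j; rewrite !mxE rmorphM. Qed.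

Lemma tensmx11 m p : (1%:M : 'M[C]_m) *t (1%:M : 'M[C]_p) = 1%:M.
Proof.
apply/matrixP=> i j.
case: (mxtens_indexP i) => i0 i1; case: (mxtens_indexP j) => j0 j1.
rewrite tensmxE !mxE (can_eq (@mxtens_indexK _ _)) xpair_eqE.
by case: (i0 == j0); case: (i1 == j1); rewrite /= ?mulr1n ?mulr0n ?mulr1 ?mulr0.
Qed.

Lemma tensmx_unitary m p (U : 'M[C]_m) (V : 'M[C]_p) :
  U \is unitarymx -> V \is unitarymx -> U *t V \is unitarymx.
Proof.
move=> Uu Vu; apply/unitarymxP.
rewrite -adjmxE adjmx_tens tensmx_mul !adjmxE.
by rewrite (unitarymxP Uu) (unitarymxP Vu) tensmx11.
Qed.

Lemma tensmx_diag_real m p (a : 'I_m -> R) (b : 'I_p -> R) :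
  dg a *t dg b = dg (fun K => a (mxtens_unindex K).1 * b (mxtens_unindex K).2).
Proof.
apply/matrixP=> i j.
case: (mxtens_indexP i) => i0 i1; case: (mxtens_indexP j) => j0 j1.
rewrite tensmxE !mxE (can_eq (@mxtens_indexK _ _)) xpair_eqE mxtens_indexK /= toCM.
by case: (i0 == j0); case: (i1 == j1); rewrite /= ?mulr1n ?mulr0n ?mulr1 ?mulr0 ?mul0r.
Qed.

Lemma tensmx_specmx m p (U : 'M[C]_m) (V : 'M[C]_p) :
  U \is unitarymx -> V \is unitarymx -> forall a b,
  specmx U a *t specmx V b
  = specmx (U *t V) (fun K => a (mxtens_unindex K).1 * b (mxtens_unindex K).2).
Proof.
move=> Uu Vu a b; rewrite /specmx (invmx_unitary_adj Uu) (invmx_unitary_adj Vu).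
by rewrite (invmx_unitary_adj (tensmx_unitary Uu Vu)) adjmx_tens -!tensmx_mul tensmx_diag_real.
Qed.

Lemma ntensmx_unitary n (U : 'M[C]_n) k :
  U \is unitarymx -> ntensmx_rec U k \is unitarymx.
Proof. by move=> Uu; elim: k => [|k IH] //=; exact: tensmx_unitary. Qed.

Lemma ntensmx_specmx n (U : 'M[C]_n) (p : 'I_n -> R) k : U \is unitarymx ->
  ntensmx_rec (specmx U p) k = specmx (ntensmx_rec U k) (iid p (k := k)).
Proof.
move=> Uu; elim: k => [|k IH].
  by congr (specmx U _); apply: funext => K; rewrite iid0.
rewrite [LHS]/= IH (tensmx_specmx Uu (ntensmx_unitary k Uu)).
by congr (specmx _ _); apply: funext => K; rewrite iidS.
Qed.

End ComplexMatrices.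

Section IIDSource.
Variables (R : realType) (d : nat) (rho : 'M[R[i]]_d).
Hypothesis rho_state : is_state rho.
Variable k : nat.

Let U := spectralmx rho.
Let p := eigval rho.
Let mu := iid p (k := k).
Let S := vN_entropy rho.

Let U_unitary : U \is unitarymx := spectral_unitarymx rho.
Let V_unitary : ntensmx_rec U k \is unitarymx := ntensmx_unitary k U_unitary.
Let V_unit : ntensmx_rec U k \in unitmx := unitarymx_unit V_unitary.
Let rhoE : rho = specmx U p. Proof. exact: psd_specmxE rho_state.1. Qed.
Let p_ge0 a : 0 <= p a. Proof. exact: psd_eigval_ge0 rho_state.1. Qed.
Let p_sum : \sum_a p a = 1. Proof. exact: state_eigval_sum. Qed.
Let p_le1 a : p a <= 1.
Proof. by rewrite -p_sum (bigD1 a) //= lerDl sumr_ge0. Qed.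

Let ntensE : ntensmx rho k.+1 = specmx (ntensmx_rec U k) mu.
Proof. by rewrite {1}rhoE; exact: ntensmx_specmx. Qed.

Let mu_sum : \sum_K mu K = 1.
Proof. by rewrite sum_iid p_sum expr1n. Qed.

(* [eps_of] reads [-oo] as [0], so [Dbar] and [Dund] must be bounded below. *)
Lemma rel_entropy_inf_gt_ninfty (P : 'M[R[i]]_d -> Prop) :
  (-oo < ereal_inf [set rel_entropy sigma rho | sigma in
     [set sigma | is_state sigma /\ P sigma]])%E.
Proof.
apply: (@lt_le_trans _ _ (- (d%:R / ln 2))%:E); first exact: ltNyr.
apply/ereal_infP => _ [sigma [hsigma _] <-].
by rewrite rhoE; exact: rel_entropy_ge U_unitary p_le1 hsigma.
Qed.

(* The competitor is the state with spectrum the type of [K] in the eigenbasis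
   of [rho]. *)
Lemma empirical_competes (K : 'I_(d ^ k.+1)) (P : \bar R -> Prop) : 0 < mu K ->
  P (shannon (empirical K) + relent (empirical K) p)%:E ->
  (ereal_inf [set rel_entropy sigma rho | sigma in
     [set sigma | is_state sigma /\ rho *m sigma = sigma *m rho /\
        P ((vN_entropy sigma)%:E + rel_entropy sigma rho)%E]]
   <= (relent (empirical K) p)%:E)%E.
Proof.
move=> muK PK; have supp a : p a = 0 -> empirical K a = 0 :> R.
  by move=> /(iid_gt0_occ muK); rewrite /empirical => ->; rewrite mul0r.
have relE : rel_entropy (specmx U (empirical K)) rho = (relent (empirical K) p)%:E.
  by rewrite rhoE (rel_entropy_specmx U_unitary).
rewrite -relE; apply: ereal_inf_lbound; exists (specmx U (empirical K)) => //.
split; first by apply: (specmx_state U_unitary); [exact: empirical_ge0 | exact: empirical_sum].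
split; first by rewrite rhoE (specmxC (unitarymx_unit U_unitary)).
by rewrite relE (vN_entropy_specmx U_unitary).
Qed.

Lemma sup_spec_entropy_ntens (gamma : R) :
  (sup_spec_entropy (eps_of k.+1 d (Dbar rho gamma)) (ntensmx rho k.+1)
     <= (k.+1%:R * (S + gamma))%:E)%E.
Proof.
apply: ereal_inf_lbound; exists (k.+1%:R * (S + gamma)) => //=.
rewrite ntensE (proj_ge_specmx V_unitary) (specmxM V_unit) (retr_specmx V_unit).
rewrite sum_indicator_mul mu_sum lerD2l lerN2; apply: iid_tail_le_eps_of => // [|K].
  exact: rel_entropy_inf_gt_ninfty.
rewrite -ltNge => mu_lt muK; apply: (empirical_competes (P := fun x => _ < x)%E) => //.
by rewrite lte_fin -(iid_lt_powR2 _ p_ge0 muK).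
Qed.

Lemma inf_spec_entropy_ntens (gamma : R) :
  ((k.+1%:R * (S - gamma))%:E
     <= inf_spec_entropy (eps_of k.+1 d (Dund rho gamma)) (ntensmx rho k.+1))%E.
Proof.
apply: ereal_sup_ubound; exists (k.+1%:R * (S - gamma)) => //=.
rewrite ntensE (proj_le_specmx V_unitary) (specmxM V_unit) (retr_specmx V_unit).
rewrite sum_indicator_mul mu_sum lerD2l lerN2; apply: iid_tail_le_eps_of => // [|K].
  exact: rel_entropy_inf_gt_ninfty.
rewrite -ltNge => mu_gt muK; apply: (empirical_competes (P := fun x => x < _)%E) => //.
by rewrite lte_fin -(powR2_lt_iid _ p_ge0 muK).
Qed.

End IIDSource.

Theorem proposition2 (R : realType) (dA : nat) (rho : 'M[R[i]]_dA) (gamma : R) :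
  is_state rho -> 0 < gamma ->
  forall n : nat, (0 < n)%N ->
    (sup_spec_entropy (eps_of n dA (Dbar rho gamma)) (ntensmx rho n)
       <= (n%:R * (vN_entropy rho + gamma))%:E)%E /\
    ((n%:R * (vN_entropy rho - gamma))%:E
       <= inf_spec_entropy (eps_of n dA (Dund rho gamma)) (ntensmx rho n))%E.
Proof.
(* The bounds hold for every real [gamma]. *)
move=> rho_state _ [//|k] _.
by split; [exact: sup_spec_entropy_ntens | exact: inf_spec_entropy_ntens].
Qed.
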